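(* Let $\lambda,\mu$ be partitions of $n$. Then: (1) $\mathbf{E}_\lambda=\mathbf{E}_\mu \iff Z_{\mathbf{E}_\lambda}=Z_{\mathbf{E}_\mu}\iff\lambda=\mu$; (2) $\mathbf{C}_\lambda=\mathbf{C}_\mu \iff Z_{\mathbf{C}_\lambda}=Z_{\mathbf{C}_\mu}\iff\lambda=\mu$; (3) $\mathbf{K}_\lambda=\mathbf{K}_\mu \iff Z_{\mathbf{K}_\lambda}=Z_{\mathbf{K}_\mu}\iff\lambda=\mu$; (4) consequently, in each of the three families $\{\mathbf{E}_\alpha\}_{\alpha\vdash n}$, $\{\mathbf{C}_\alpha\}_{\alpha\vdash n}$, $\{\mathbf{K}_\alpha\}_{\alpha\vdash n}$ the number of distinct isomorphism classes (and of distinct cycle index series) equals $p(n)$, the number of partitions of $n$.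
   Context: Species are functors from finite sets with bijections to finite sets; equality means natural isomorphism. For $H\le S_n$, $X^n/H$ is the species with $(X^n/H)[U]=\{\lambda H:\lambda:[n]\to U\text{ bijection}\}$, transport by left composition. The cycle index series of a species $F$ is $Z_F=\sum_{n\ge0}\frac1{n!}\sum_{\sigma\in S_n}|\mathrm{Fix}\,F[\sigma]|\,p_{\lambda(\sigma)}$, with $\lambda(\sigma)$ the cycle type and $p_\lambda$ power sums. For $\alpha\vdash n$: $\mathbf{E}_\alpha=X^n/S_\alpha$ with $S_\alpha=S_{\alpha_1}\times\cdots\times S_{\alpha_k}$ the Young subgroup; $\mathbf{C}_\alpha=X^n/\langle\sigma_\alpha\rangle$ where $\sigma_\alpha$ is the standard permutation filling cycles of lengths $\alpha_1,\alpha_2,\ldots$ with $1,\ldots,n$ in increasing order; and, writing $\alpha=(i_1^{\alpha_1},\ldots,i_m^{\alpha_m})$ with distinct part sizes $i_j$ of multiplicities $\alpha_j$, $\mathbf{K}_\alpha=X^n/G_\alpha$ where $G_\alpha=\langle\sigma_{i_m^{\alpha_m}}\rangle\times\cdots\times\langle\sigma_{i_1^{\alpha_1}}\rangle$, the factors being cyclic groups generated by standard permutations of shape $i_j^{\alpha_j}$ acting on consecutive disjoint blocks of $[n]$ (equivalently $\mathbf{K}_\alpha$ is the species product of the $\mathbf{C}_{i_j^{\alpha_j}}$). *)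

From HB Require Import structures.
From mathcomp Require Import all_boot all_order all_algebra all_fingroup.
From mathcomp Require Import mpoly.
Set Implicit Arguments. Unset Strict Implicit. Unset Printing Implicit Defensive.

Import GRing.Theory.

Record species := Species {
  sp_obj : finType -> finType;
  sp_tr : forall (U V : finType) (f : U -> V), bijective f -> sp_obj U -> sp_obj V;
  sp_tr_id : forall (U : finType) (p : bijective (@id U)) x, sp_tr p x = x;
  sp_tr_comp : forall (U V W : finType) (f : U -> V) (g : V -> W)
      (pf : bijective f) (pg : bijective g) (pgf : bijective (g \o f)) x,
      sp_tr pgf x = sp_tr pg (sp_tr pf x)
}.

(* Equality of species = natural isomorphism. *)
Definition sp_iso (F G : species) : Prop :=
  exists a : forall U : finType, sp_obj F U -> sp_obj G U,
    (forall U, bijective (a U)) /\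
    (forall (U V : finType) (f : U -> V) (pf : bijective f) (x : sp_obj F U),
        a V (sp_tr pf x) = sp_tr pf (a U x)).

Section Quotient.
Variables (n : nat) (H : {set 'S_n}).

(* C is a left coset  lambda H  with lambda : [n] -> U a bijection. *)
Definition is_coset (U : finType) (C : {set {ffun 'I_n -> U}}) : bool :=
  [exists l : {ffun 'I_n -> U},
     [&& injectiveb l, [forall u, exists i, l i == u]
       & C == [set [ffun i => l (h i)] | h : 'S_n in H]]].

Definition coset_obj (U : finType) : finType :=
  {C : {set {ffun 'I_n -> U}} | is_coset C}.

Definition coset_img (U V : finType) (f : U -> V) (C : {set {ffun 'I_n -> U}}) :
  {set {ffun 'I_n -> V}} := [set [ffun i => f (g i)] | g : {ffun 'I_n -> U} in C].

Lemma coset_img_coset (U V : finType) (f : U -> V) (pf : bijective f)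
  (C : coset_obj U) : is_coset (coset_img f (val C)).
Proof.
case: C => C /= /existsP[l /and3P[/injectiveP linj /forallP lsurj /eqP ->]].
apply/existsP; exists [ffun i => f (l i)]; apply/and3P; split.
- apply/injectiveP => i j; rewrite !ffunE => /(bij_inj pf); exact: linj.
- apply/forallP => v; case: pf => g fK gK.
  have /existsP[i /eqP li] := lsurj (g v).
  by apply/existsP; exists i; rewrite ffunE li gK.
- rewrite /coset_img -imset_comp; apply/eqP/eq_imset => h /=.
  by apply/ffunP => i; rewrite !ffunE.
Qed.

Definition coset_tr (U V : finType) (f : U -> V) (pf : bijective f)
  (C : coset_obj U) : coset_obj V :=
  exist _ (coset_img f (val C)) (coset_img_coset pf C).

Lemma coset_tr_id (U : finType) (p : bijective (@id U)) x : coset_tr p x = x.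
Proof.
apply: val_inj; rewrite /= /coset_img -[RHS]imset_id.
by apply: eq_imset => g; apply/ffunP => i; rewrite ffunE.
Qed.

Lemma coset_tr_comp (U V W : finType) (f : U -> V) (g : V -> W)
  (pf : bijective f) (pg : bijective g) (pgf : bijective (g \o f)) x :
  coset_tr pgf x = coset_tr pg (coset_tr pf x).
Proof.
apply: val_inj; rewrite /= /coset_img -imset_comp.
by apply: eq_imset => h; apply/ffunP => i; rewrite !ffunE.
Qed.

Definition Xquot : species := Species coset_tr_id coset_tr_comp.
End Quotient.

(* Cycle index series.  The variable p_k (k >= 1) of the degree-m      *)
(* component is 'X_(k-1) in {mpoly rat[m.+1]}; Z_F is the sequence of  *)
(* its homogeneous components (indexed by m).                          *)
Lemma perm_bijective (T : finType) (s : {perm T}) : bijective (fun x => s x).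
Proof. by exists (fun x => s^-1%g x) => x; rewrite ?permK ?permKV. Qed.

Definition fixcount (F : species) (m : nat) (s : 'S_m) : nat :=
  #|[set x : sp_obj F 'I_m | sp_tr (perm_bijective s) x == x]|.

Definition power_sum_mono (m : nat) (s : 'S_m) : {mpoly rat[m.+1]} :=
  \prod_(c in porbits s) 'X_(inord (#|c|.-1)).

Definition cycle_index (F : species) (m : nat) : {mpoly rat[m.+1]} :=
  \sum_(s : 'S_m) ((fixcount F s)%:R / (m`!)%:R) *: power_sum_mono s.

Definition Zeq (F G : species) : Prop := forall m, cycle_index F m = cycle_index G m.

Definition is_partition (n : nat) (a : seq nat) : bool :=
  [&& sorted geq a, all (fun x => 0 < x) a & sumn a == n].

(* index of the block (of consecutive integers, block k of size a_k)   *)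
(* containing i (0-indexed)                                             *)
Definition blk (a : seq nat) (i : nat) : nat :=
  count (fun k => sumn (take k.+1 a) <= i) (iota 0 (size a)).

(* the standard permutation sigma_a on nat: cycles (1..a1)(a1+1..)...   *)
Definition stdfun (a : seq nat) (i : nat) : nat :=
  let b := blk a i in
  if i.+1 < sumn (take b.+1 a) then i.+1 else sumn (take b a).

(* a permutation given by a function (the function is a permutation in  *)
(* every use below; the fallback 1 is never reached)                    *)
Definition perm_of (n : nat) (f : nat -> nat) : 'S_n :=
  odflt 1%g [pick s : 'S_n | [forall i, val (s i) == f (val i)]].

Definition std_perm (n : nat) (a : seq nat) : 'S_n := perm_of n (stdfun a).

Definition std_perm_on (n : nat) (a : seq nat) (v : nat) : 'S_n :=
  perm_of n (fun i => if nth 0 a (blk a i) == v then stdfun a i else i).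

Definition young (n : nat) (a : seq nat) : {set 'S_n} :=
  [set s : 'S_n | [forall i : 'I_n, blk a (s i) == blk a i]].

Definition Kgroup (n : nat) (a : seq nat) : {set 'S_n} :=
  <<[set std_perm_on n a (val v) | v : 'I_n.+1 & val v \in a]>>%g.

Definition Esp (n : nat) (a : seq nat) : species := Xquot (young n a).
Definition Csp (n : nat) (a : seq nat) : species := Xquot <[std_perm n a]>%g.
Definition Ksp (n : nat) (a : seq nat) : species := Xquot (Kgroup n a).

Definition num_classes (T : Type) (R : T -> T -> Prop) (m : nat) (F : 'I_m -> T)
  (k : nat) : Prop :=
  exists rep : 'I_k -> 'I_m,
    (forall i j, R (F (rep i)) (F (rep j)) -> i = j) /\
    (forall j, exists i, R (F j) (F (rep i))).

From Pilot Require Import Defs.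
From mathcomp Require Import all_boot all_order all_algebra all_fingroup.
From mathcomp Require Import mpoly zify.
Set Implicit Arguments. Unset Strict Implicit.
Import GRing.Theory Num.Theory.

(* For a subgroup H of S_n, a permutation s fixes a point of X^n/H iff s is
   conjugate to an element of H.  So the monomials occurring in the degree-n
   part of the cycle index of X^n/H are exactly the cycle types of the
   elements of H.  Each of E_a, C_a and K_a is X^n/H for a group H with
   sigma_a in H and H inside the Young subgroup S_a.  An element of S_a has at
   least as many cycles as a has parts, with equality only when its cycles are
   the blocks of a, i.e. when its cycle type is a.  Hence a is recovered from
   the cycle index as the unique cycle type of H with fewest cycles, whereas
   isomorphic species always have equal cycle indices. *)

Local Notation psum a k := (sumn (take k a)).

Lemma count_iota_interval p q m : p <= q <= m ->
  count (fun j => p <= j < q) (iota 0 m) = q - p.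
Proof.
case/andP=> pq qm; rewrite -(subnKC qm) -(subnKC pq) !iotaD !count_cat add0n.
rewrite (@eq_in_count _ _ pred0 (iota 0 p)) => [|j]; last by rewrite mem_iota /=; lia.
rewrite (@eq_in_count _ _ predT (iota p _)) => [|j]; last by rewrite mem_iota /=; lia.
rewrite (@eq_in_count _ _ pred0 (iota (p + _) _)) => [|j]; last by rewrite mem_iota /=; lia.
by rewrite !count_pred0 count_predT size_iota; lia.
Qed.

Lemma mem_leq_sumn x s : x \in s -> x <= sumn s.
Proof. by elim: s => //= y s IH; rewrite inE => /predU1P[-> | /IH]; lia. Qed.

Lemma leq_psum a j k : j <= k -> psum a j <= psum a k.
Proof. by elim: a j k => [|x a IH] [|j] [|k] //= jk; rewrite ?leq_add2l; auto. Qed.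

Lemma psumS a k : k < size a -> psum a k.+1 = psum a k + nth 0 a k.
Proof. by move=> ka; rewrite (take_nth 0 ka) sumn_rcons. Qed.

Lemma blkE a i k : k < size a -> psum a k <= i < psum a k.+1 -> blk a i = k.
Proof.
move=> ka /andP[lo hi]; rewrite /blk -(subnKC (ltnW ka)) iotaD count_cat add0n.
rewrite (@eq_in_count _ _ predT) => [|j]; last first.
  rewrite mem_iota add0n => /andP[_ jk] /=.
  exact: leq_trans (leq_psum a jk) lo.
rewrite (@eq_in_count _ _ pred0 (iota k _)) => [|j]; last first.
  rewrite mem_iota => /andP[kj _] /=; apply/negbTE; rewrite -ltnNge.
  exact: leq_trans hi (leq_psum a (kj : k.+1 <= j.+1)).
by rewrite count_predT size_iota count_pred0 addn0.
Qed.

Lemma blkP a i : i < sumn a ->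
  blk a i < size a /\ psum a (blk a i) <= i < psum a (blk a i).+1.
Proof.
move=> ia; suff [k ka /andP[lo hi]] : exists2 k, k < size a & psum a k <= i < psum a k.+1.
  by rewrite (blkE ka) ?lo.
elim: a i ia => [|x a IH] i //= ia.
have [ix | xi] := ltnP i x; first by exists 0 => //=; lia.
have [k ka ik] : exists2 k, k < size a & psum a k <= i - x < psum a k.+1.
  by apply: IH; lia.
by exists k.+1 => //=; lia.
Qed.

Lemma blk_eqE a i k : k < size a -> i < sumn a ->
  (blk a i == k) = (psum a k <= i < psum a k.+1).
Proof. by move=> ka ia; apply/eqP/idP => [<- | /(blkE ka)//]; case: (blkP ia). Qed.

Lemma stdfunP a i : i < sumn a -> blk a (stdfun a i) = blk a i /\ stdfun a i < sumn a.
Proof.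
move=> ia; have [ba /andP[lo hi]] := blkP ia.
have hS : psum a (blk a i).+1 <= sumn a by rewrite -[in X in _ <= X](take_size a) leq_psum.
by rewrite /stdfun; case: ifP => lt; split; try apply: blkE; lia.
Qed.

Lemma stdfun_inj a i j : i < sumn a -> j < sumn a -> stdfun a i = stdfun a j -> i = j.
Proof.
move=> ia ja eij; have [bi _] := stdfunP ia; have [bj _] := stdfunP ja.
have bij : blk a i = blk a j by rewrite -bi -bj eij.
have [_ /andP[i1 i2]] := blkP ia; have [_ /andP[j1 j2]] := blkP ja.
move: eij; rewrite /stdfun -bij; rewrite -bij in j1 j2.
by case: ifP; case: ifP; lia.
Qed.

Lemma iter_stdfun a i t : i < sumn a ->
  iter t (stdfun a) i = psum a (blk a i) + (i - psum a (blk a i) + t) %% nth 0 a (blk a i).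
Proof.
move=> ia; have [ba /andP[lo hi]] := blkP ia.
set b := blk a i in ba lo hi *; have := psumS ba; set d := nth 0 a b => hS.
elim: t => [|t IH]; first by rewrite addn0 modn_small /=; lia.
set r := (i - psum a b + t) %% d in IH.
have rd : r < d by rewrite ltn_mod; lia.
have br : blk a (psum a b + r) = b by apply: blkE => //; lia.
have -> : (i - psum a b + t.+1) %% d = r.+1 %% d
  by rewrite addnS /r -[in RHS]addn1 modnDml addn1.
rewrite iterS IH /stdfun br hS -addnS; case: ifP => rd1; first by rewrite modn_small; lia.
by rewrite (_ : r.+1 = d) ?modnn ?addn0; lia.
Qed.

Definition stdfun_on a v i := if nth 0 a (blk a i) == v then stdfun a i else i.

Lemma stdfun_onP a v i : i < sumn a ->
  blk a (stdfun_on a v i) = blk a i /\ stdfun_on a v i < sumn a.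
Proof. by rewrite /stdfun_on; case: ifP => _ // /stdfunP. Qed.

Lemma stdfun_on_inj a v i j : i < sumn a -> j < sumn a ->
  stdfun_on a v i = stdfun_on a v j -> i = j.
Proof.
move=> ia ja eij; have [bi _] := stdfun_onP v ia; have [bj _] := stdfun_onP v ja.
have bij : blk a i = blk a j by rewrite -bi -bj eij.
by move: eij; rewrite /stdfun_on -bij; case: ifP => _ //; apply: stdfun_inj.
Qed.

Lemma perm_ofE n (f : nat -> nat) : (forall i : 'I_n, f i < n) ->
  (forall i j : 'I_n, f i = f j -> i = j) -> forall i : 'I_n, val (Defs.perm_of n f i) = f i.
Proof.
move=> f_lt f_inj; pose g := [ffun i : 'I_n => Ordinal (f_lt i)].
have g_inj : injective g by move=> i j; rewrite !ffunE => /(congr1 val) /f_inj.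
rewrite /Defs.perm_of; case: pickP => [s /forallP fs i | none i]; first exact/eqP.
by have /negbT/forallPn[j] := none (perm g_inj); rewrite permE ffunE eqxx.
Qed.

Section Composition.
Variables (n : nat) (a : seq nat).

Lemma young_group_set : group_set (young n a).
Proof.
apply/group_setP; split; first by rewrite inE; apply/forallP => i; rewrite perm1.
move=> x y; rewrite !inE => /forallP x_blk /forallP y_blk; apply/forallP => i.
by rewrite permM (eqP (y_blk _)) (eqP (x_blk _)).
Qed.

Canonical young_group := Group young_group_set.

Lemma youngP (h : 'S_n) : reflect (forall i, blk a (h i) = blk a i) (h \in young n a).
Proof. by rewrite inE; apply: (iffP forallP) => h_blk i; apply/eqP. Qed.

Definition block (i : 'I_n) : {set 'I_n} := [set j : 'I_n | blk a j == blk a i].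
Definition blocks : {set {set 'I_n}} := [set block i | i : 'I_n].

Lemma porbit_young_sub (h : 'S_n) i : h \in young n a -> porbit h i \subset block i.
Proof.
move=> hY; apply/subsetP => j /porbitP[t ->].
by rewrite inE (youngP _ (groupX t hY)).
Qed.

Lemma bigcup_block_porbit (h : 'S_n) i : h \in young n a ->
  \bigcup_(j in porbit h i) block j = block i.
Proof.
move=> hY; apply/eqP; rewrite eqEsubset (bigcup_max i) ?porbit_id // andbT.
apply/bigcupsP => j ij; apply/subsetP => k; rewrite !inE => /eqP->.
by have := subsetP (porbit_young_sub i hY) j ij; rewrite inE.
Qed.

Lemma blocks_porbits (h : 'S_n) : h \in young n a ->
  blocks = [set \bigcup_(j in c) block j | c : {set 'I_n} in porbits h].
Proof.
move=> hY; rewrite /porbits -imset_comp; apply: eq_imset => i /=.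
by rewrite bigcup_block_porbit.
Qed.

Lemma leq_card_blocks (h : 'S_n) : h \in young n a -> #|blocks| <= #|porbits h|.
Proof. by move=> hY; rewrite (blocks_porbits hY) leq_imset_card. Qed.

Lemma porbits_young_eq (h : 'S_n) : h \in young n a ->
  #|porbits h| <= #|blocks| -> porbits h = blocks.
Proof.
move=> hY le_orb; set hull := fun c : {set 'I_n} => \bigcup_(j in c) block j.
have /imset_injP hull_inj : #|hull @: porbits h| == #|porbits h|.
  by rewrite -blocks_porbits // eqn_leq leq_card_blocks ?andbT.
apply: eq_imset => i; apply/eqP; rewrite eqEsubset porbit_young_sub //=.
apply/subsetP => j; rewrite inE => /eqP ji.
have <- : porbit h j = porbit h i.
  apply: hull_inj; rewrite ?imset_f // /hull !bigcup_block_porbit //.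
  by apply/setP => k; rewrite !inE ji.
exact: porbit_id.
Qed.

Hypothesis a_sum : sumn a = n.

Let ord_lt_sumn (i : 'I_n) : i < sumn a. Proof. by rewrite a_sum. Qed.

Lemma std_permE i : val (std_perm n a i) = stdfun a i.
Proof.
apply: perm_ofE => [j | j k /stdfun_inj jk]; last exact/val_inj/jk.
by case: (stdfunP (ord_lt_sumn j)); rewrite a_sum.
Qed.

Lemma std_perm_onE v i : val (std_perm_on n a v i) = stdfun_on a v i.
Proof.
apply: (@perm_ofE n (stdfun_on a v)) => [j | j k /stdfun_on_inj jk]; last exact/val_inj/jk.
by case: (stdfun_onP v (ord_lt_sumn j)); rewrite a_sum.
Qed.

Lemma std_perm_young : std_perm n a \in young n a.
Proof.
by apply/youngP => i; rewrite std_permE; case: (stdfunP (ord_lt_sumn i)).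
Qed.

Lemma std_perm_on_young v : std_perm_on n a v \in young n a.
Proof.
by apply/youngP => i; rewrite std_perm_onE; case: (stdfun_onP v (ord_lt_sumn i)).
Qed.

Lemma porbits_std_perm : porbits (std_perm n a) = blocks.
Proof.
apply: eq_imset => i; apply/eqP; rewrite eqEsubset porbit_young_sub ?std_perm_young //=.
apply/subsetP => j; rewrite inE => /eqP ji.
have [ba /andP[i_lo i_hi]] := blkP (ord_lt_sumn i).
have [_ /andP[j_lo j_hi]] := blkP (ord_lt_sumn j).
move: i_hi j_lo j_hi; rewrite ji (psumS ba); set d := nth 0 a (blk a i) => i_hi j_lo j_hi.
apply/porbitP; exists (j + d - i); apply: val_inj.
have -> : forall t, val ((std_perm n a ^+ t)%g i) = iter t (stdfun a) i.
  by move=> t; rewrite permX; elim: t => //= t <-; rewrite std_permE.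
rewrite iter_stdfun // -/d.
have -> : i - psum a (blk a i) + (j + d - i) = j - psum a (blk a i) + d by lia.
by rewrite /= modnDr modn_small; lia.
Qed.

Lemma val_prod_std_perm_on (r : seq 'I_n.+1) i : uniq r ->
  val ((\prod_(v <- r) std_perm_on n a v)%g i) =
  if nth 0 a (blk a i) \in map val r then stdfun a i else i.
Proof.
elim: r i => [|v r IH] i /=; first by rewrite big_nil perm1.
case/andP=> vr r_uniq; rewrite big_cons permM IH // std_perm_onE in_cons.
have [-> _] := stdfun_onP v (ord_lt_sumn i).
rewrite /stdfun_on; case: eqP => [-> | _] //=.
by rewrite (mem_map (@ord_inj n.+1)) (negbTE vr).
Qed.

Lemma std_perm_Kgroup : std_perm n a \in Kgroup n a.
Proof.
suff -> : std_perm n a = (\prod_(v : 'I_n.+1 | val v \in a) std_perm_on n a v)%g.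
  by apply: group_prod => v va; apply/mem_gen/imsetP; exists v; rewrite ?inE.
apply/permP => i; apply: val_inj; rewrite std_permE -big_filter.
rewrite val_prod_std_perm_on ?filter_uniq ?index_enum_uniq //.
have [ba _] := blkP (ord_lt_sumn i).
have blk_in : nth 0 a (blk a i) \in a by exact: mem_nth.
have blk_le : nth 0 a (blk a i) < n.+1 by rewrite ltnS -{2}a_sum mem_leq_sumn.
case: mapP => // -[]; exists (Ordinal blk_le) => //.
by rewrite mem_filter /= blk_in mem_index_enum.
Qed.

Lemma Kgroup_young : Kgroup n a \subset young n a.
Proof.
rewrite gen_subG; apply/subsetP => _ /imsetP[v _ ->]; exact: std_perm_on_young.
Qed.

End Composition.

Canonical Kgroup_group n a := [group of Kgroup n a].

Section Monomials.
Variable n : nat.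

Definition cycle_mono (s : 'S_n) : 'X_{1..n.+1} :=
  (\sum_(c in porbits s) U_(inord #|c|.-1))%MM.

Definition part_mono (a : seq nat) : 'X_{1..n.+1} := (\sum_(x <- a) U_(inord x.-1))%MM.

Lemma power_sum_monoE s : power_sum_mono s = 'X_[cycle_mono s].
Proof. by rewrite (big_morph (fun m => 'X_[m]) (@mpolyXD _ _) (@mpolyX0 _ _)). Qed.

Lemma mdeg_cycle_mono s : mdeg (cycle_mono s) = #|porbits s|.
Proof. by rewrite mdeg_sum -sum1_card; apply: eq_bigr => c _; apply: mdeg1. Qed.

Lemma mdeg_part_mono a : mdeg (part_mono a) = size a.
Proof. by rewrite mdeg_sum -sum1_size; apply: eq_bigr => x _; apply: mdeg1. Qed.

Lemma cycle_mono_conjg (h p : 'S_n) : cycle_mono (h ^ p)%g = cycle_mono h.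
Proof.
have conjg_act t i : ((h ^ p) ^+ t)%g (p i) = p ((h ^+ t)%g i).
  by rewrite -conjXg conjgE !permM permK.
have porbit_conjg i : porbit (h ^ p)%g (p i) = p @: porbit h i.
  apply/setP => j; apply/porbitP/imsetP => [[t ->] | [k /porbitP[t ->] ->]].
    by exists ((h ^+ t)%g i); rewrite ?mem_porbit ?conjg_act.
  by exists t; rewrite conjg_act.
rewrite /cycle_mono; have -> : porbits (h ^ p)%g = [set p @: c | c : {set 'I_n} in porbits h].
  rewrite /porbits -imset_comp; apply/setP => c; apply/imsetP/imsetP => -[i _ ->].
    by exists ((p^-1)%g i); rewrite //= -porbit_conjg permKV.
  by exists (p i); rewrite //= porbit_conjg.
rewrite big_imset => [|c1 c2 _ _]; last exact/imset_inj/perm_inj.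
by apply: eq_bigr => c _; rewrite card_imset //; apply: perm_inj.
Qed.

Lemma part_monoE a (x : 'I_n.+1) : all (fun y => 0 < y <= n) a ->
  part_mono a x = count_mem x.+1 a.
Proof.
move=> /allP a_range; rewrite mnm_sumE -sum1_count [RHS]big_mkcond /=.
apply: eq_big_seq => y /a_range y_range; rewrite mnm1E.
suff -> : (inord y.-1 == x) = (y == x.+1) by [].
apply/eqP/eqP => [<- | ->]; first by rewrite inordK; lia.
exact: inord_val.
Qed.

Lemma part_mono_inj l m : is_partition n l -> is_partition n m ->
  part_mono l = part_mono m -> l = m.
Proof.
have range a : is_partition n a -> all (fun y => 0 < y <= n) a.
  case/and3P=> _ /allP a_pos /eqP a_sum; apply/allP => y ya.
  by rewrite a_pos //= -a_sum mem_leq_sumn.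
move=> pl pm lm; have count_eq v : count_mem v l = count_mem v m.
  have [/andP[v_gt0 v_le] | v_out] := boolP (0 < v <= n).
    have v_ord : v.-1 < n.+1 by lia.
    by rewrite -(prednK v_gt0) -[v.-1]/(val (Ordinal v_ord)) -!part_monoE ?range ?lm.
  by rewrite !(count_memPn _) //; apply: contra v_out; apply: (allP (range _ _)).
have geq_trans : transitive geq by move=> y x z /= yx zy; apply: leq_trans zy yx.
apply: (sorted_eq geq_trans) => [x y /andP[]|||]; first by lia.
- by case/and3P: pl.
- by case/and3P: pm.
by apply/allP => v _; rewrite /= count_eq.
Qed.

End Monomials.

Section PositiveComposition.
Variables (n : nat) (a : seq nat).
Hypotheses (a_sum : sumn a = n) (a_pos : all (fun x => 0 < x) a).

Lemma psum_lt k : k < size a -> psum a k < n.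
Proof.
move=> ka; have := psumS ka; have := all_nthP 0 a_pos k ka.
by have := leq_psum a ka; rewrite take_size a_sum; lia.
Qed.

Lemma blk_psum k : k < size a -> blk a (psum a k) = k.
Proof.
move=> ka; apply/eqP; rewrite blk_eqE ?a_sum ?psum_lt // leqnn psumS // -addn1.
by rewrite leq_add2l (all_nthP 0 a_pos).
Qed.

Definition part_block (k : 'I_(size a)) : {set 'I_n} := [set j : 'I_n | blk a j == k].

Lemma blocksE : blocks n a = [set part_block k | k : 'I_(size a)].
Proof.
apply/setP => B; apply/imsetP/imsetP => [[i _ ->] | [k _ ->]].
  have ia : i < sumn a by rewrite a_sum.
  have [ba _] := blkP ia.
  by exists (Ordinal ba) => //; apply/setP => j; rewrite !inE.
exists (Ordinal (psum_lt (ltn_ord k))) => //; apply/setP => j.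
by rewrite !inE /= blk_psum.
Qed.

Lemma part_block_inj : injective part_block.
Proof.
move=> k1 k2 k12; apply: val_inj.
have : Ordinal (psum_lt (ltn_ord k1)) \in part_block k1 by rewrite inE /= blk_psum.
by rewrite k12 inE /= blk_psum // => /eqP.
Qed.

Lemma card_part_block k : #|part_block k| = nth 0 a k.
Proof.
rewrite -sum1_card (eq_bigl (fun j : 'I_n => blk a j == k)) => [|j]; last by rewrite inE.
rewrite -(big_mkord (fun j => blk a j == k) (fun _ => 1)) sum1_count.
rewrite (@eq_in_count _ _ (fun j => psum a k <= j < psum a k.+1)) => [|j]; last first.
  by rewrite mem_index_iota => /andP[_ jn]; rewrite blk_eqE // a_sum.
rewrite count_iota_interval psumS ?addKn //.
by rewrite leq_addr -psumS // subn0 -a_sum -[in X in _ <= X](take_size a) leq_psum.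
Qed.

Lemma card_blocks : #|blocks n a| = size a.
Proof. by rewrite blocksE card_imset ?card_ord //; apply: part_block_inj. Qed.

Lemma cycle_mono_blocks (h : 'S_n) :
  porbits h = blocks n a -> cycle_mono h = part_mono n a.
Proof.
move=> orb_h; rewrite /cycle_mono orb_h blocksE big_imset /=; last first.
  by move=> ? ? _ _; apply: part_block_inj.
under eq_bigr do rewrite card_part_block.
by rewrite /part_mono [RHS](big_nth 0%N) big_mkord.
Qed.

Lemma young_cycle_mono h : h \in young n a ->
  size a <= mdeg (cycle_mono h) ?= iff (cycle_mono h == part_mono n a).
Proof.
move=> hY; rewrite mdeg_cycle_mono -card_blocks; split; first exact: leq_card_blocks.
apply/eqP/eqP => [blocks_orb | mono_h]; last first.
  by rewrite -mdeg_cycle_mono mono_h mdeg_part_mono card_blocks.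
by apply/cycle_mono_blocks/porbits_young_eq; rewrite ?blocks_orb.
Qed.

Lemma cycle_mono_std_perm : cycle_mono (std_perm n a) = part_mono n a.
Proof. exact/cycle_mono_blocks/porbits_std_perm. Qed.

End PositiveComposition.

Section CycleTypes.
Variables (n : nat) (H : {group 'S_n}).

Definition cycle_types : seq 'X_{1..n.+1} := [seq cycle_mono h | h in H].

Lemma fixcount_gt0 h : h \in H -> 0 < fixcount (Xquot H) h.
Proof.
move=> hH; pose C := [set [ffun i => g i] | g : 'S_n in H].
have C_coset : is_coset H C.
  apply/existsP; exists [ffun i => i]; rewrite /C; apply/and3P; split.
  - by apply/injectiveP => i j; rewrite !ffunE.
  - by apply/forallP => u; apply/existsP; exists u; rewrite ffunE.
  - by apply/eqP/eq_imset => g; apply/ffunP => i; rewrite !ffunE.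
rewrite card_gt0; apply/set0Pn; exists (exist _ C C_coset); rewrite inE.
apply/eqP/val_inj; rewrite /= /coset_img; apply/setP => f.
apply/imsetP/imsetP => [[_ /imsetP[g gH ->] ->] | [g gH ->]].
  by exists (g * h)%g; rewrite ?groupM //; apply/ffunP => i; rewrite !ffunE permM.
exists [ffun i => (g * h^-1)%g i].
  by apply/imsetP; exists (g * h^-1)%g; rewrite ?groupM ?groupV.
by apply/ffunP => i; rewrite !ffunE permM permKV.
Qed.

(* A coset l H fixed by s contains s l, so s l = l h with h in H. *)
Lemma fixcount_gt0_conjg s : 0 < fixcount (Xquot H) s ->
  exists2 h, h \in H & exists p, s = (h ^ p)%g.
Proof.
rewrite card_gt0 => /set0Pn[[C C_coset]]; rewrite inE => /eqP/(congr1 val)/= sC.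
have /existsP[l /and3P[/injectiveP l_inj _ /eqP defC]] := C_coset.
have : [ffun i => s (l i)] \in C.
  rewrite -[in X in _ \in X]sC; apply/imsetP; exists l => //.
  by rewrite defC; apply/imsetP; exists 1%g; rewrite // -ffunP => i; rewrite !ffunE perm1.
rewrite defC => /imsetP[h hH /ffunP slh]; exists h => //; exists (perm l_inj).
apply/permP => x; rewrite conjgE !permM.
have {}slh i : s (perm l_inj i) = perm l_inj (h i) by have := slh i; rewrite !ffunE !permE.
by rewrite -slh permKV.
Qed.

Local Open Scope ring_scope.

Lemma mcoeff_cycle_index (F : species) e :
  (cycle_index F n)@_e = (\sum_(s | cycle_mono s == e) fixcount F s)%N%:R / n`!%:R.
Proof.
rewrite /cycle_index raddf_sum natr_sum mulr_suml [RHS]big_mkcond /=; apply: eq_bigr => s _.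
by rewrite mcoeffZ power_sum_monoE mcoeffX; case: eqP; rewrite ?mulr1 ?mulr0.
Qed.

Lemma msupp_cycle_index : msupp (cycle_index (Xquot H) n) =i cycle_types.
Proof.
move=> e; rewrite mcoeff_msupp mcoeff_cycle_index mulf_eq0 invr_eq0 !pnatr_eq0.
rewrite (gtn_eqF (fact_gt0 n)) orbF sum_nat_eq0 negb_forall_in.
apply/existsP/imageP => [[s /andP[/eqP<-]] | [h hH ->]].
  by rewrite -lt0n => /fixcount_gt0_conjg[h hH [p ->]]; exists h; rewrite ?cycle_mono_conjg.
by exists h; rewrite eqxx -lt0n fixcount_gt0.
Qed.

End CycleTypes.

Lemma cycle_index_cycle_types n (G H : {group 'S_n}) :
  cycle_index (Xquot G) n = cycle_index (Xquot H) n -> cycle_types G =i cycle_types H.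
Proof. by move=> GH e; rewrite -!msupp_cycle_index GH. Qed.

Lemma cycle_types_partition n a (H : {group 'S_n}) : is_partition n a ->
  std_perm n a \in H -> H \subset young n a ->
  part_mono n a \in cycle_types H /\
  {in cycle_types H, forall e, size a <= mdeg e ?= iff (e == part_mono n a)}.
Proof.
case/and3P=> _ a_pos /eqP a_sum aH HY; split.
  by apply/imageP; exists (std_perm n a); rewrite ?cycle_mono_std_perm.
by move=> _ /imageP[h hH ->]; apply/young_cycle_mono/(subsetP HY).
Qed.

Lemma cycle_types_partition_inj n l m (Hl Hm : {group 'S_n}) :
  is_partition n l -> is_partition n m ->
  std_perm n l \in Hl -> Hl \subset young n l ->
  std_perm n m \in Hm -> Hm \subset young n m ->
  cycle_types Hl =i cycle_types Hm -> l = m.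
Proof.
move=> pl pm lHl HlY mHm HmY HlHm.
have [l_in l_min] := cycle_types_partition pl lHl HlY.
have [m_in m_min] := cycle_types_partition pm mHm HmY.
rewrite HlHm in l_in; rewrite -HlHm in m_in.
have := (m_min _ l_in).1; have := (l_min _ m_in).1.
rewrite !mdeg_part_mono => le_lm le_ml.
apply/(part_mono_inj pl pm)/eqP.
by rewrite -(m_min _ l_in).2 mdeg_part_mono eqn_leq le_ml le_lm.
Qed.

Lemma Xquot_Zeq_partition_inj n (G : seq nat -> {group 'S_n}) :
  (forall a, is_partition n a -> std_perm n a \in G a /\ G a \subset young n a) ->
  forall l m, is_partition n l -> is_partition n m ->
  Zeq (Xquot (G l)) (Xquot (G m)) -> l = m.
Proof.
move=> G_ok l m pl pm lm; have [lG GlY] := G_ok l pl; have [mG GmY] := G_ok m pm.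
exact: cycle_types_partition_inj pl pm lG GlY mG GmY (cycle_index_cycle_types (lm n)).
Qed.

Lemma Esp_Zeq_inj n l m : is_partition n l -> is_partition n m ->
  Zeq (Esp n l) (Esp n m) -> l = m.
Proof.
apply: (@Xquot_Zeq_partition_inj n (young_group n)) => a /and3P[_ _ /eqP a_sum].
by rewrite std_perm_young.
Qed.

Lemma Csp_Zeq_inj n l m : is_partition n l -> is_partition n m ->
  Zeq (Csp n l) (Csp n m) -> l = m.
Proof.
apply: (@Xquot_Zeq_partition_inj n (fun a => <[std_perm n a]>%G)) => a /and3P[_ _ /eqP a_sum].
by rewrite cycle_id cycle_subG std_perm_young.
Qed.

Lemma Ksp_Zeq_inj n l m : is_partition n l -> is_partition n m ->
  Zeq (Ksp n l) (Ksp n m) -> l = m.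
Proof.
apply: (@Xquot_Zeq_partition_inj n (Kgroup_group n)) => a /and3P[_ _ /eqP a_sum].
by rewrite std_perm_Kgroup ?Kgroup_young.
Qed.

Lemma sp_iso_refl F : sp_iso F F.
Proof. by exists (fun U x => x); split=> // U; exists id. Qed.

Lemma sp_iso_Zeq F G : sp_iso F G -> Zeq F G.
Proof.
move=> [alpha [alpha_bij alpha_nat]] m; apply: eq_bigr => s _; congr (_%:R / _ *: _)%R.
have [beta alphaK betaK] := alpha_bij 'I_m.
rewrite /fixcount -(card_imset _ (can_inj alphaK)); apply: eq_card => y.
apply/imsetP/idP => [[x] | ]; first by rewrite !inE => /eqP sx ->; rewrite -alpha_nat sx.
rewrite inE => /eqP sy; exists (beta y); rewrite ?betaK // inE.
by apply/eqP/(can_inj alphaK); rewrite alpha_nat betaK sy.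
Qed.

Lemma species_family_iff (F : seq nat -> species) n :
  (forall l m, is_partition n l -> is_partition n m -> Zeq (F l) (F m) -> l = m) ->
  forall l m, is_partition n l -> is_partition n m ->
  (sp_iso (F l) (F m) <-> Zeq (F l) (F m)) /\ (Zeq (F l) (F m) <-> l = m).
Proof.
move=> F_inj l m pl pm; split; split=> [|lm]; first exact: sp_iso_Zeq.
- by rewrite (F_inj _ _ pl pm lm); apply: sp_iso_refl.
- exact: F_inj.
- by rewrite lm.
Qed.

Lemma num_classes_uniq (T : eqType) (S : Type) (R : S -> S -> Prop) (F : T -> S) P x0 :
  uniq P -> {in P &, forall x y, R (F x) (F y) <-> x = y} ->
  num_classes R (fun i : 'I_(size P) => F (nth x0 P i)) (size P).
Proof.
move=> P_uniq R_eq; exists id; split=> [i j | j]; last by exists j; apply/R_eq; rewrite ?mem_nth.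
move/R_eq; rewrite !mem_nth // => /(_ isT isT)/eqP; rewrite nth_uniq // => /eqP.
exact: val_inj.
Qed.

Lemma num_classes_species_family (F : seq nat -> species) n P :
  (forall l m, is_partition n l -> is_partition n m -> Zeq (F l) (F m) -> l = m) ->
  uniq P -> (forall a, (a \in P) = is_partition n a) ->
  num_classes sp_iso (fun i : 'I_(size P) => F (nth [::] P i)) (size P) /\
  num_classes Zeq (fun i : 'I_(size P) => F (nth [::] P i)) (size P).
Proof.
move=> F_inj P_uniq P_part; have F_iff := species_family_iff F_inj.
split; apply: num_classes_uniq => // l m; rewrite !P_part => pl pm.
  by have [iso_Z Z_eq] := F_iff l m pl pm; apply: iff_trans iso_Z Z_eq.
exact: (F_iff l m pl pm).2.
Qed.

Theorem mainTheorem4 (n : nat) :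
  (forall l m : seq nat, is_partition n l -> is_partition n m ->
     [/\ ((sp_iso (Esp n l) (Esp n m) <-> Zeq (Esp n l) (Esp n m)) /\
          (Zeq (Esp n l) (Esp n m) <-> l = m)),
         ((sp_iso (Csp n l) (Csp n m) <-> Zeq (Csp n l) (Csp n m)) /\
          (Zeq (Csp n l) (Csp n m) <-> l = m)) &
         ((sp_iso (Ksp n l) (Ksp n m) <-> Zeq (Ksp n l) (Ksp n m)) /\
          (Zeq (Ksp n l) (Ksp n m) <-> l = m))]) /\
  (forall P : seq (seq nat), uniq P -> (forall a, (a \in P) = is_partition n a) ->
     [/\ num_classes sp_iso (fun i : 'I_(size P) => Esp n (nth [::] P i)) (size P) /\
          num_classes Zeq (fun i : 'I_(size P) => Esp n (nth [::] P i)) (size P),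
         num_classes sp_iso (fun i : 'I_(size P) => Csp n (nth [::] P i)) (size P) /\
          num_classes Zeq (fun i : 'I_(size P) => Csp n (nth [::] P i)) (size P) &
         num_classes sp_iso (fun i : 'I_(size P) => Ksp n (nth [::] P i)) (size P) /\
          num_classes Zeq (fun i : 'I_(size P) => Ksp n (nth [::] P i)) (size P)]).
Proof.
have E_inj := @Esp_Zeq_inj n; have C_inj := @Csp_Zeq_inj n; have K_inj := @Ksp_Zeq_inj n.
split=> [l m pl pm | P P_uniq P_part].
  by split; [apply: species_family_iff E_inj l m pl pm |
    apply: species_family_iff C_inj l m pl pm | apply: species_family_iff K_inj l m pl pm].
by split; [apply: num_classes_species_family E_inj P_uniq P_part |
  apply: num_classes_species_family C_inj P_uniq P_part |
  apply: num_classes_species_family K_inj P_uniq P_part].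
Qed.
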